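(* Let $U_1,\ldots,U_K$ be mutually commuting unitary operators on a Hilbert space $\mathcal{H}_Q$ of finite dimension $D_Q$, and let $\{|\alpha_k\rangle\}_{k=1}^{D_Q}$ be an orthonormal basis of $\mathcal{H}_Q$ consisting of common eigenvectors of all the $U_j$. If $U_1,\ldots,U_K$ are unambiguously distinguishable, then for every state of the form $|\xi\rangle=\sum_{k=1}^{D_Q}\sqrt{p_k}\,e^{i\theta_k}|\alpha_k\rangle$ with all $p_k>0$, $\sum_k p_k=1$ and real $\theta_k$, the vectors $U_1|\xi\rangle,\ldots,U_K|\xi\rangle$ are linearly independent (so the $U_j$ can be unambiguously discriminated using the probe $|\xi\rangle$ without any ancilla).
   Context: A finite list of unitary operators $U_1,\ldots,U_K$ on a finite-dimensional Hilbert space $\mathcal{H}_Q$ is called unambiguously distinguishable if there exist a finite-dimensional Hilbert space $\mathcal{H}_A$ (an ancilla) and a unit vector $|\psi\rangle\in\mathcal{H}_Q\otimes\mathcal{H}_A$ such that the $K$ output vectors $(U_j\otimes\mathbb{1}_A)|\psi\rangle$ are linearly independent. *)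

From HB Require Import structures.
From mathcomp Require Import all_boot all_order all_algebra.
From mathcomp Require Import complex mxtens.
From mathcomp Require Import reals trigo.
Set Implicit Arguments. Unset Strict Implicit. Unset Printing Implicit Defensive.
Import Order.TTheory GRing.Theory Num.Theory.
Local Open Scope ring_scope.
Local Open Scope complex_scope.

(* States of a Hilbert space of dimension n: column vectors in C^n, C = R[i]. *)

Definition adjmx (R : rcfType) m n (A : 'M[R[i]]_(m, n)) : 'M[R[i]]_(n, m) :=
  map_mx (fun z => z^*) A^T.

Definition inner (R : rcfType) n (u v : 'cV[R[i]]_n) : R[i] :=
  \sum_(i < n) (u i 0)^* * v i 0.

Definition unitary (R : rcfType) n (U : 'M[R[i]]_n) : Prop :=
  adjmx U *m U = 1%:M /\ U *m adjmx U = 1%:M.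

Definition lin_indep (R : rcfType) n K (v : 'I_K -> 'cV[R[i]]_n) : Prop :=
  row_free (\matrix_(j < K) (v j)^T).

Definition unamb_distinguishable (R : rcfType) DQ K (U : 'I_K -> 'M[R[i]]_DQ)
  : Prop :=
  exists (dA : nat) (psi : 'cV[R[i]]_(DQ * dA)),
    inner psi psi = 1 /\
    lin_indep (fun j => (U j *t (1%:M : 'M[R[i]]_dA)) *m psi).

Definition expi (R : realType) (t : R) : R[i] := cos t +i* sin t.

From HB Require Import structures.
From mathcomp Require Import all_boot all_order all_algebra.
From mathcomp Require Import complex mxtens.
From mathcomp Require Import reals trigo.
Import Order.TTheory GRing.Theory Num.Theory.
Local Open Scope ring_scope.
Local Open Scope complex_scope.

Set Implicit Arguments.
Unset Strict Implicit.
Unset Printing Implicit Defensive.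

(** A linear dependence [sum_j c_j U_j xi = 0] makes [W := sum_j c_j U_j]
    annihilate [xi].  Since the [alpha_k] are common eigenvectors of the
    [U_j], they are eigenvectors of [W]; expanding [xi] in this basis, every
    coordinate of [xi] is nonzero, so all eigenvalues of [W] vanish and
    [W = 0].  Then [(W (x) 1) psi = 0] for the probe [psi] witnessing
    distinguishability, and the independence of the [(U_j (x) 1) psi] forces
    [c = 0]. *)

Section LinearIndependence.

Variables (F : fieldType) (n K : nat).

Lemma mulmx_tr_combination (v : 'I_K -> 'cV[F]_n) (c : 'rV_K) :
  c *m \matrix_(j < K) (v j)^T = (\sum_j c 0 j *: v j)^T.
Proof.
apply/matrixP => i k; rewrite !mxE summxE; apply: eq_bigr => j _.
by rewrite !mxE (ord1 i).
Qed.

Lemma row_free_trP (v : 'I_K -> 'cV[F]_n) :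
  row_free (\matrix_(j < K) (v j)^T) <->
  (forall c : 'I_K -> F, \sum_j c j *: v j = 0 -> forall j, c j = 0).
Proof.
split=> [free_v c | indep_v].
- move=> sum0 j; have /row_free_inj inj_v := free_v.
  have : \row_j c j *m \matrix_(j < K) (v j)^T = 0 *m \matrix_(j < K) (v j)^T.
    rewrite mulmx_tr_combination mul0mx.
    by under eq_bigr do rewrite mxE; rewrite sum0 trmx0.
  by move/inj_v/rowP/(_ j); rewrite !mxE.
- apply: inj_row_free => c; rewrite mulmx_tr_combination => /(congr1 trmx).
  by rewrite trmxK trmx0 => /indep_v c0; apply/rowP => j; rewrite mxE c0.
Qed.

End LinearIndependence.

Lemma combination_mulmx (R : pzRingType) n K (U : 'I_K -> 'M[R]_n)
    (c : 'I_K -> R) (x : 'cV_n) :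
  \sum_j c j *: (U j *m x) = (\sum_j c j *: U j) *m x.
Proof. by rewrite mulmx_suml; apply: eq_bigr => j _; rewrite scalemxAl. Qed.

Lemma tensmx_combination (R : comPzRingType) m n p q K
    (A : 'I_K -> 'M[R]_(m, n)) (B : 'M[R]_(p, q)) (c : 'I_K -> R) :
  \sum_j c j *: (A j *t B) = (\sum_j c j *: A j) *t B.
Proof.
apply/matrixP => i k; rewrite !(summxE, mxE) mulr_suml.
by apply: eq_bigr => j _; rewrite !mxE mulrA.
Qed.

Lemma common_eigenvector_combination (F : fieldType) n K
    (U : 'I_K -> 'M[F]_n) (c : 'I_K -> F) (x : 'cV_n) :
  (forall j, exists lam, U j *m x = lam *: x) ->
  exists mu, (\sum_j c j *: U j) *m x = mu *: x.
Proof.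
move=> eigU; apply: (big_ind (fun W => exists mu, W *m x = mu *: x)).
- by exists 0; rewrite mul0mx scale0r.
- move=> W1 W2 [mu1 W1x] [mu2 W2x]; exists (mu1 + mu2).
  by rewrite mulmxDl W1x W2x scalerDl.
- move=> j _; have [lam Ujx] := eigU j; exists (c j * lam).
  by rewrite -scalemxAl Ujx scalerA.
Qed.

Lemma eigenbasis_annihilator_eq0 (F : fieldType) n
    (alpha : 'I_n -> 'cV[F]_n) (W : 'M_n) (a : 'I_n -> F) :
  row_free (\matrix_(k < n) (alpha k)^T) ->
  (forall k, exists mu, W *m alpha k = mu *: alpha k) ->
  (forall k, a k != 0) ->
  W *m (\sum_k a k *: alpha k) = 0 -> W = 0.
Proof.
move=> free_alpha /fin_all_exists[mu eig_alpha] a_neq0 Wxi0.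
have W_alpha0 k : W *m alpha k = 0.
  suff mu0 : mu k = 0 by rewrite eig_alpha mu0 scale0r.
  have amu0 : forall l, a l * mu l = 0.
    apply: (iffLR (row_free_trP alpha) free_alpha).
    rewrite -[RHS]Wxi0 mulmx_sumr; apply: eq_bigr => l _.
    by rewrite -scalemxAr eig_alpha scalerA.
  by have /eqP := amu0 k; rewrite mulf_eq0 (negPf (a_neq0 k)) => /eqP.
set B := \matrix_(k < n) (alpha k)^T.
have BWt0 : B *m W^T = 0.
  apply/matrixP => k i.
  have W_alpha_ki0 : (W *m alpha k) i 0 = 0 by rewrite W_alpha0 mxE.
  rewrite !mxE -[RHS]W_alpha_ki0 mxE; apply: eq_bigr => l _.
  by rewrite !mxE mulrC.
have B_unit : B \in unitmx by rewrite -row_free_unit.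
by rewrite -[W]trmxK -[W^T](mulKmx B_unit) BWt0 mulmx0 trmx0.
Qed.

Lemma inner_combination (R : rcfType) n K (u : 'cV[R[i]]_n)
    (v : 'I_K -> 'cV_n) (c : 'I_K -> R[i]) :
  inner u (\sum_l c l *: v l) = \sum_l c l * inner u (v l).
Proof.
rewrite /inner; under eq_bigr do rewrite summxE mulr_sumr.
rewrite exchange_big; apply: eq_bigr => l _; rewrite mulr_sumr.
by apply: eq_bigr => i _; rewrite mxE mulrCA.
Qed.

Lemma orthonormal_lin_indep (R : rcfType) n K (v : 'I_K -> 'cV[R[i]]_n) :
  (forall k l, inner (v k) (v l) = (k == l)%:R) -> lin_indep v.
Proof.
move=> orth_v; apply/row_free_trP => c comb0 j.
have := inner_combination (v j) v c; rewrite comb0.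
rewrite [LHS]big1 => [|i _]; last by rewrite mxE mulr0.
rewrite (bigD1 j) //= orth_v eqxx mulr1 big1 ?addr0 => [-> // | l /negbTE].
by rewrite orth_v eq_sym => ->; rewrite mulr0.
Qed.

Lemma unamb_distinguishable_free (R : rcfType) DQ K
    (U : 'I_K -> 'M[R[i]]_DQ) :
  unamb_distinguishable U ->
  forall c, \sum_j c j *: U j = 0 -> forall j, c j = 0.
Proof.
case=> dA [psi [_ free_Upsi]] c sumU0.
apply: (iffLR (row_free_trP _) free_Upsi).
by rewrite combination_mulmx tensmx_combination sumU0 tens0mx mul0mx.
Qed.

Lemma expi_neq0 (R : realType) (t : R) : expi t != 0.
Proof.
apply/eqP => -[cos0 sin0].
by have /eqP := cos2Dsin2 t; rewrite cos0 sin0 expr0n addr0 eq_sym oner_eq0.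
Qed.

Theorem corollary2 (R : realType) (DQ K : nat)
  (U : 'I_K -> 'M[R[i]]_DQ)
  (alpha : 'I_DQ -> 'cV[R[i]]_DQ) :
  (forall j, unitary (U j)) ->
  (forall j l, U j *m U l = U l *m U j) ->
  (forall k l, inner (alpha k) (alpha l) = (k == l)%:R) ->
  (forall j k, exists lam : R[i], U j *m alpha k = lam *: alpha k) ->
  unamb_distinguishable U ->
  forall (p theta : 'I_DQ -> R),
    (forall k, 0 < p k) ->
    \sum_(k < DQ) p k = 1 ->
    let xi := \sum_(k < DQ) (((Num.sqrt (p k))%:C * expi (theta k)) *: alpha k) in
    lin_indep (fun j => U j *m xi).
Proof.
move=> _ _ orth_alpha eig_alpha distU p theta p_gt0 _ xi.
apply/row_free_trP => c; rewrite combination_mulmx => W_xi0.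
apply: (unamb_distinguishable_free distU).
apply: (eigenbasis_annihilator_eq0 (orthonormal_lin_indep orth_alpha) _ _ W_xi0).
  by move=> k; apply: common_eigenvector_combination => j; apply: eig_alpha.
move=> k; rewrite mulf_neq0 ?expi_neq0 //.
by apply/eqP => -[/eqP]; rewrite gt_eqF // sqrtr_gt0.
Qed.
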